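(* In the setting below, let $f,g\in[0,\infty)^{n\times p}$ and let $W(g)$ be the weight matrix computed at $g$. If $\sum_{i,j}W(g)_{ij}f_{ij}\le\sum_{i,j}W(g)_{ij}g_{ij}$, then $\mathcal L(f)\le\mathcal L(g)$.
   Context: Let $M=(m_{ij})\in\{0,1\}^{n\times p}$, $m_i=\sum_jm_{ij}\ge1$ for all $i$, $m=\sum_im_i$, and fix constants $\hat\sigma_{1,j}>0$, $\hat\sigma_2>0$. For $0<b<c$ and $q_1,q_2>0$ with $q_1\tanh(q_2(c-b))=b$, let $d=b^2/2+(q_1/q_2)\ln\cosh(q_2(c-b))$ and $\rho_{b,c}(z)=z^2/2$ if $|z|\le b$, $d-(q_1/q_2)\ln\cosh(q_2(c-|z|))$ if $b\le|z|\le c$, $d$ if $|z|\ge c$. Let $\rho_1=\rho_{b_1,c_1}$, $\rho_2=\rho_{b_2,c_2}$ (each with admissible constants), $\psi_k=\rho_k'$, $w_k(z)=\psi_k(z)/z$ ($z\ne0$), $w_k(0)=1$, and $h_k(z)=\rho_k(\sqrt z)$. For $f\in[0,\infty)^{n\times p}$, $$\mathcal L(f)=\frac{\hat\sigma_2^2}{m}\sum_{i=1}^n m_i\,h_2\!\Big(\frac{1}{m_i\hat\sigma_2^2}\sum_{j=1}^p m_{ij}\hat\sigma_{1,j}^2\,h_1\big(f_{ij}/\hat\sigma_{1,j}^2\big)\Big).$$ For $g\in[0,\infty)^{n\times p}$ let $t_i(g)=\sqrt{\frac1{m_i}\sum_jm_{ij}\hat\sigma_{1,j}^2h_1(g_{ij}/\hat\sigma_{1,j}^2)}$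 and $W(g)_{ij}=m_{ij}\,w_1\big(\sqrt{g_{ij}}/\hat\sigma_{1,j}\big)\,w_2\big(t_i(g)/\hat\sigma_2\big)$. *)

From Stdlib Require Import Reals.
From Coquelicot Require Import Coquelicot.
Open Scope R_scope.

Fixpoint rsum (n : nat) (F : nat -> R) : R :=
  match n with
  | O => 0
  | S k => rsum k F + F k
  end.

Definition admissible (b c q1 q2 : R) : Prop :=
  0 < b /\ b < c /\ 0 < q1 /\ 0 < q2 /\ q1 * tanh (q2 * (c - b)) = b.

Definition rho_d (b c q1 q2 : R) : R :=
  b ^ 2 / 2 + (q1 / q2) * ln (cosh (q2 * (c - b))).

Definition rho (b c q1 q2 : R) (z : R) : R :=
  if Rle_dec (Rabs z) b then z ^ 2 / 2
  else if Rle_dec (Rabs z) c then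
    rho_d b c q1 q2 - (q1 / q2) * ln (cosh (q2 * (c - Rabs z)))
  else rho_d b c q1 q2.

Definition psi (b c q1 q2 : R) (z : R) : R := Derive (rho b c q1 q2) z.

Definition wfun (b c q1 q2 : R) (z : R) : R :=
  if Req_EM_T z 0 then 1 else psi b c q1 q2 z / z.

Definition hfun (b c q1 q2 : R) (z : R) : R := rho b c q1 q2 (sqrt z).

Section Loss.
Variables (b1 c1 q11 q12 b2 c2 q21 q22 : R).
Variables (n p : nat) (M : nat -> nat -> R) (sig1 : nat -> R) (sig2 : R).

Definition h1 := hfun b1 c1 q11 q12.
Definition h2 := hfun b2 c2 q21 q22.
Definition w1 := wfun b1 c1 q11 q12.
Definition w2 := wfun b2 c2 q21 q22.

Definition mi (i : nat) : R := rsum p (fun j => M i j).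
Definition mtot : R := rsum n mi.

Definition Loss (f : nat -> nat -> R) : R :=
  sig2 ^ 2 / mtot *
  rsum n (fun i => mi i *
    h2 (/ (mi i * sig2 ^ 2) *
        rsum p (fun j => M i j * sig1 j ^ 2 * h1 (f i j / sig1 j ^ 2)))).

Definition t_i (g : nat -> nat -> R) (i : nat) : R :=
  sqrt (/ mi i * rsum p (fun j => M i j * sig1 j ^ 2 * h1 (g i j / sig1 j ^ 2))).

Definition Wmat (g : nat -> nat -> R) (i j : nat) : R :=
  M i j * w1 (sqrt (g i j) / sig1 j) * w2 (t_i g i / sig2).
End Loss.

From Stdlib Require Import Reals Lra.
From Coquelicot Require Import Coquelicot.
Open Scope R_scope.

(* The function h = rho o sqrt is concave on [0, +oo): its derivative w(sqrt x) / 2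
   is nonincreasing, since w equals 1 on [0, b], q1 tanh(q2 (c - z)) / z on [b, c]
   and 0 beyond.  Hence h(x) <= h(y) + w(sqrt y) / 2 (x - y).  Applying this tangent
   bound to h1 inside each row and to h2 (whose slope is nonnegative) outside
   majorizes L(f) by L(g) plus a positive multiple of
   sum W(g)_ij f_ij - sum W(g)_ij g_ij, which the hypothesis makes nonpositive. *)

Lemma derivable_pt_lim_glue (f fl fr : R -> R) x r l : 0 < r ->
  (forall y, x - r < y <= x -> f y = fl y) ->
  (forall y, x <= y < x + r -> f y = fr y) ->
  derivable_pt_lim fl x l -> derivable_pt_lim fr x l ->
  derivable_pt_lim f x l.
Proof.
  intros hr Hl Hr Dl Dr eps heps.
  destruct (Dl eps heps) as [dl Hdl]; destruct (Dr eps heps) as [dr Hdr].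
  assert (hd : 0 < Rmin r (Rmin dl dr)).
  { destruct dl, dr; simpl; repeat apply Rmin_pos; auto. }
  exists (mkposreal _ hd); intros h hh hlt; simpl in hlt.
  pose proof (Rmin_l r (Rmin dl dr)); pose proof (Rmin_r r (Rmin dl dr)).
  pose proof (Rmin_l dl dr); pose proof (Rmin_r dl dr).
  destruct (Rle_lt_dec h 0) as [hn | hp].
  - rewrite Rabs_left1 in hlt by lra.
    rewrite (Hl (x + h)), (Hl x) by lra; apply Hdl; auto.
    rewrite Rabs_left1; lra.
  - rewrite Rabs_right in hlt by lra.
    rewrite (Hr (x + h)), (Hr x) by lra; apply Hdr; auto.
    rewrite Rabs_right; lra.
Qed.

(* [tanh x = 1 - 2 / (e^(2x) + 1)] *)
Lemma tanh_le x y : x <= y -> tanh x <= tanh y.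
Proof.
  intros hxy; unfold tanh, sinh, cosh; rewrite !exp_Ropp.
  assert (hx := exp_pos x); assert (hy := exp_pos y).
  assert (hexp : exp x <= exp y).
  { destruct (Req_dec x y) as [-> | ]; [lra | left; apply exp_increasing; lra]. }
  set (A := exp x) in *; set (B := exp y) in *.
  replace ((A - / A) / 2 / ((A + / A) / 2)) with (1 - 2 / (A * A + 1)) by (field; nra).
  replace ((B - / B) / 2 / ((B + / B) / 2)) with (1 - 2 / (B * B + 1)) by (field; nra).
  assert (/ (B * B + 1) <= / (A * A + 1)) by (apply Rinv_le_contravar; nra).
  unfold Rdiv; lra.
Qed.

Lemma tanh_0 : tanh 0 = 0.
Proof. unfold tanh, sinh, cosh; rewrite Ropp_0, exp_0; field. Qed.

Lemma tanh_nonneg x : 0 <= x -> 0 <= tanh x.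
Proof. intros; rewrite <- tanh_0; apply tanh_le; auto. Qed.

Lemma le_of_derive_toward (F dF : R -> R) t s :
  (forall u, Rmin t s <= u <= Rmax t s -> is_derive F u (dF u)) ->
  (forall u, Rmin t s <= u <= Rmax t s -> (s - t) * dF u <= 0) ->
  F s <= F t.
Proof.
  intros D Hsign.
  destruct (MVT_gen F t s dF) as [u [hu Hmvt]].
  - intros u hu; apply D; lra.
  - intros u hu; apply continuity_pt_filterlim.
    apply (ex_derive_continuous (K := R_AbsRing) (V := R_NormedModule)).
    eexists; apply D; exact hu.
  - specialize (Hsign u hu); nra.
Qed.

Definition rho_mid (b c q1 q2 z : R) : R :=
  rho_d b c q1 q2 - q1 / q2 * ln (cosh (q2 * (c - z))).

Lemma derivable_pt_lim_rho_mid b c q1 q2 z : 0 < q2 ->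
  derivable_pt_lim (rho_mid b c q1 q2) z (q1 * tanh (q2 * (c - z))).
Proof.
  intros hq2; apply is_derive_Reals; unfold rho_mid, cosh, tanh, sinh.
  assert (he := exp_pos (q2 * (c + - z))).
  assert (he' := exp_pos (- (q2 * (c + - z)))).
  auto_derive; unfold Rminus, cosh; [lra | field; lra].
Qed.

Section Rho.
Variables b c q1 q2 : R.
Hypothesis adm : admissible b c q1 q2.

(* Closed forms of [psi] and [w] on [[0, +oo)]. *)
Definition psi_pos (z : R) : R :=
  if Rle_dec z b then z else if Rle_dec z c then q1 * tanh (q2 * (c - z)) else 0.

Definition w_pos (z : R) : R :=
  if Rle_dec z b then 1 else if Rle_dec z c then q1 * tanh (q2 * (c - z)) / z else 0.

Lemma rho_low z : Rabs z <= b -> rho b c q1 q2 z = z ^ 2 / 2.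
Proof. intros h; unfold rho; destruct (Rle_dec (Rabs z) b); [auto | lra]. Qed.

Lemma rho_middle z : b <= z <= c -> rho b c q1 q2 z = rho_mid b c q1 q2 z.
Proof.
  destruct adm as (hb & _); intros hz; unfold rho, rho_mid; rewrite Rabs_right by lra.
  destruct (Rle_dec z b); [| destruct (Rle_dec z c); [auto | lra]].
  replace z with b by lra; unfold rho_d; ring.
Qed.

Lemma rho_high z : c <= z -> rho b c q1 q2 z = rho_d b c q1 q2.
Proof.
  destruct adm as (hb & hbc & _); intros hz; unfold rho; rewrite Rabs_right by lra.
  destruct (Rle_dec z b); [lra |]; destruct (Rle_dec z c); [| auto].
  replace z with c by lra; rewrite Rminus_diag, Rmult_0_r, cosh_0, ln_1; ring.
Qed.

Lemma derivable_pt_lim_rho z : 0 <= z ->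
  derivable_pt_lim (rho b c q1 q2) z (psi_pos z).
Proof.
  destruct adm as (hb & hbc & hq1 & hq2 & htanh); intros hz.
  assert (Dsq : forall y, derivable_pt_lim (fun u => u ^ 2 / 2) y y).
  { intros y; apply is_derive_Reals; auto_derive; [auto | field]. }
  assert (Dcst : forall k y, derivable_pt_lim (fun _ => k) y 0).
  { intros k y; apply derivable_pt_lim_const. }
  unfold psi_pos; destruct (Rle_dec z b); [destruct (Req_dec z b) as [-> | ] |].
  - apply (derivable_pt_lim_glue _ (fun u => u ^ 2 / 2) (rho_mid b c q1 q2) b (Rmin b (c - b))).
    + apply Rmin_pos; lra.
    + intros y hy; pose proof (Rmin_l b (c - b)).
      apply rho_low; rewrite Rabs_right; lra.
    + intros y hy; pose proof (Rmin_r b (c - b)); apply rho_middle; lra.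
    + apply Dsq.
    + pose proof (derivable_pt_lim_rho_mid b c q1 q2 b hq2) as D.
      rewrite htanh in D; exact D.
  - apply (derivable_pt_lim_locally_ext (fun u => u ^ 2 / 2) _ z (- b) b); [lra | | auto].
    intros y hy; symmetry; apply rho_low, Rabs_le; lra.
  - destruct (Rle_dec z c); [destruct (Req_dec z c) as [-> | ] |].
    + rewrite Rminus_diag, Rmult_0_r, tanh_0, Rmult_0_r.
      apply (derivable_pt_lim_glue _ (rho_mid b c q1 q2) (fun _ => rho_d b c q1 q2) c (c - b)).
      * lra.
      * intros y hy; apply rho_middle; lra.
      * intros y hy; apply rho_high; lra.
      * pose proof (derivable_pt_lim_rho_mid b c q1 q2 c hq2) as D.
        rewrite Rminus_diag, Rmult_0_r, tanh_0, Rmult_0_r in D; exact D.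
      * apply Dcst.
    + apply (derivable_pt_lim_locally_ext (rho_mid b c q1 q2) _ z b c); [lra | | ].
      * intros y hy; symmetry; apply rho_middle; lra.
      * apply derivable_pt_lim_rho_mid; auto.
    + apply (derivable_pt_lim_locally_ext (fun _ => rho_d b c q1 q2) _ z c (z + 1));
        [lra | | apply Dcst].
      intros y hy; symmetry; apply rho_high; lra.
Qed.

Lemma psi_pos_eq z : 0 <= z -> psi_pos z = w_pos z * z.
Proof.
  destruct adm as (hb & _); intros hz; unfold psi_pos, w_pos.
  destruct (Rle_dec z b); [ring |]; destruct (Rle_dec z c); [field; lra | ring].
Qed.

Lemma wfun_pos z : 0 <= z -> wfun b c q1 q2 z = w_pos z.
Proof.
  destruct adm as (hb & _); intros hz; unfold wfun.
  destruct (Req_EM_T z 0) as [-> | hz0].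
  - unfold w_pos; destruct (Rle_dec 0 b); [auto | lra].
  - unfold psi; rewrite (is_derive_unique _ _ (psi_pos z)).
    + rewrite psi_pos_eq by auto; field; auto.
    + apply is_derive_Reals, derivable_pt_lim_rho; auto.
Qed.

Lemma w_pos_nonneg z : 0 <= z -> 0 <= w_pos z.
Proof.
  destruct adm as (hb & hbc & hq1 & hq2 & _); intros hz; unfold w_pos.
  destruct (Rle_dec z b); [lra |]; destruct (Rle_dec z c); [| lra].
  assert (0 <= tanh (q2 * (c - z))) by (apply tanh_nonneg; nra).
  apply Rmult_le_pos; [nra | left; apply Rinv_0_lt_compat; lra].
Qed.

(* On [[b, c]], [w] is a ratio of a nonincreasing nonnegative numerator
   and an increasing denominator; the admissibility equation makes it continuous at [b]. *)
Lemma w_pos_nonincreasing t u : 0 <= t <= u -> w_pos u <= w_pos t.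
Proof.
  pose proof (w_pos_nonneg t) as hwt.
  destruct adm as (hb & hbc & hq1 & hq2 & htanh); intros htu.
  destruct (Rle_dec u c) as [huc | huc].
  2: { unfold w_pos at 1; destruct (Rle_dec u b); [lra |].
       destruct (Rle_dec u c); [lra | apply hwt; lra]. }
  unfold w_pos; destruct (Rle_dec u b); [destruct (Rle_dec t b); lra |].
  destruct (Rle_dec u c); [| lra].
  assert (Tb : tanh (q2 * (c - u)) <= tanh (q2 * (c - b))) by (apply tanh_le; nra).
  assert (T0 : 0 <= tanh (q2 * (c - u))) by (apply tanh_nonneg; nra).
  destruct (Rle_dec t b).
  - apply (Rmult_le_reg_r u); [lra |].
    unfold Rdiv; rewrite Rmult_assoc, Rinv_l by lra; nra.
  - assert (Tt : tanh (q2 * (c - u)) <= tanh (q2 * (c - t))) by (apply tanh_le; nra).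
    destruct (Rle_dec t c); [| lra].
    unfold Rdiv; apply Rmult_le_compat; [nra | left; apply Rinv_0_lt_compat; lra | nra |].
    apply Rinv_le_contravar; lra.
Qed.

Lemma wfun_nonneg z : 0 <= z -> 0 <= wfun b c q1 q2 z.
Proof. intros; rewrite wfun_pos; auto; apply w_pos_nonneg; auto. Qed.

(* [u |-> rho u - w(t) u^2 / 2] has derivative [(w u - w t) u], which changes sign at [t]. *)
Lemma rho_sub_quadratic_le t s : 0 <= t -> 0 <= s ->
  rho b c q1 q2 s - wfun b c q1 q2 t * s ^ 2 / 2
  <= rho b c q1 q2 t - wfun b c q1 q2 t * t ^ 2 / 2.
Proof.
  intros ht hs; rewrite wfun_pos by auto.
  set (k := w_pos t).
  apply (le_of_derive_toward (fun u => rho b c q1 q2 u - k * u ^ 2 / 2)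
           (fun u => (w_pos u - k) * u)).
  - intros u hu; assert (0 <= u) by (revert hu; apply Rmin_case; lra).
    apply is_derive_Reals.
    replace ((w_pos u - k) * u) with (psi_pos u - k * (INR 2 * u ^ (2 - 1)) / 2)
      by (rewrite psi_pos_eq by auto; simpl; field).
    apply derivable_pt_lim_minus; [apply derivable_pt_lim_rho; auto |].
    unfold Rdiv; apply derivable_pt_lim_scal_right, derivable_pt_lim_scal,
      derivable_pt_lim_pow.
  - intros u hu; destruct (Rle_dec t s).
    + rewrite Rmin_left, Rmax_right in hu by lra.
      assert (w_pos u <= k) by (apply w_pos_nonincreasing; lra).
      assert ((w_pos u - k) * u <= 0) by nra; nra.
    + rewrite Rmin_right, Rmax_left in hu by lra.
      assert (k <= w_pos u) by (apply w_pos_nonincreasing; lra).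
      assert (0 <= (w_pos u - k) * u) by nra; nra.
Qed.

Lemma hfun_tangent x y : 0 <= x -> 0 <= y ->
  hfun b c q1 q2 x <= hfun b c q1 q2 y + wfun b c q1 q2 (sqrt y) / 2 * (x - y).
Proof.
  intros hx hy; unfold hfun.
  pose proof (rho_sub_quadratic_le (sqrt y) (sqrt x) (sqrt_pos y) (sqrt_pos x)) as T.
  rewrite !pow2_sqrt in T by auto; lra.
Qed.

Lemma hfun_tangent_scaled s x y : 0 < s -> 0 <= x -> 0 <= y ->
  hfun b c q1 q2 (x / s ^ 2)
  <= hfun b c q1 q2 (y / s ^ 2) + wfun b c q1 q2 (sqrt y / s) / (2 * s ^ 2) * (x - y).
Proof.
  intros hs hx hy; assert (hs2 : 0 < s ^ 2) by (apply pow_lt; auto).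
  pose proof (hfun_tangent (x / s ^ 2) (y / s ^ 2)) as T.
  rewrite sqrt_div_alt, sqrt_pow2 in T by lra.
  replace (wfun b c q1 q2 (sqrt y / s) / (2 * s ^ 2) * (x - y))
    with (wfun b c q1 q2 (sqrt y / s) / 2 * (x / s ^ 2 - y / s ^ 2)) by (field; lra).
  apply T; apply Rdiv_le_0_compat; auto.
Qed.

Lemma hfun_nonneg x : 0 <= x -> 0 <= hfun b c q1 q2 x.
Proof.
  destruct adm as (hb & _); intros hx; unfold hfun.
  pose proof (rho_sub_quadratic_le (sqrt x) 0 (sqrt_pos x) (Rle_refl 0)) as T.
  rewrite rho_low in T by (rewrite Rabs_R0; lra).
  pose proof (wfun_nonneg (sqrt x) (sqrt_pos x)); pose proof (pow2_ge_0 (sqrt x)).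
  nra.
Qed.

End Rho.

Lemma rsum_ext n F G : (forall k, (k < n)%nat -> F k = G k) -> rsum n F = rsum n G.
Proof. induction n; simpl; intros H; [auto | rewrite IHn, H; auto]. Qed.

Lemma rsum_le n F G : (forall k, (k < n)%nat -> F k <= G k) -> rsum n F <= rsum n G.
Proof. induction n; simpl; intros H; [lra | apply Rplus_le_compat; auto]. Qed.

Lemma rsum_nonneg n F : (forall k, (k < n)%nat -> 0 <= F k) -> 0 <= rsum n F.
Proof. induction n; simpl; intros H; [lra | apply Rplus_le_le_0_compat; auto]. Qed.

Lemma rsum_plus n F G : rsum n (fun k => F k + G k) = rsum n F + rsum n G.
Proof. induction n; simpl; [ring | rewrite IHn; ring]. Qed.

Lemma rsum_minus n F G : rsum n (fun k => F k - G k) = rsum n F - rsum n G.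
Proof. induction n; simpl; [ring | rewrite IHn; ring]. Qed.

Lemma rsum_scal_l n a F : rsum n (fun k => a * F k) = a * rsum n F.
Proof. induction n; simpl; [ring | rewrite IHn; ring]. Qed.

Lemma rsum_hfun_tangent b c q1 q2 p (a s x y : nat -> R) :
  admissible b c q1 q2 ->
  (forall j, (j < p)%nat -> 0 <= a j) -> (forall j, (j < p)%nat -> 0 < s j) ->
  (forall j, (j < p)%nat -> 0 <= x j) -> (forall j, (j < p)%nat -> 0 <= y j) ->
  rsum p (fun j => a j * s j ^ 2 * hfun b c q1 q2 (x j / s j ^ 2))
  <= rsum p (fun j => a j * s j ^ 2 * hfun b c q1 q2 (y j / s j ^ 2))
     + / 2 * rsum p (fun j => a j * wfun b c q1 q2 (sqrt (y j) / s j) * (x j - y j)).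
Proof.
  intros adm ha hs hx hy; rewrite <- rsum_scal_l, <- rsum_plus.
  apply rsum_le; intros j hj.
  assert (hsj := hs j hj); assert (hs2 : 0 < s j ^ 2) by (apply pow_lt; auto).
  pose proof (hfun_tangent_scaled b c q1 q2 adm (s j) (x j) (y j)) as T.
  assert (0 <= a j * s j ^ 2) by (apply Rmult_le_pos; [auto | lra]).
  replace (a j * s j ^ 2 * hfun b c q1 q2 (y j / s j ^ 2)
           + / 2 * (a j * wfun b c q1 q2 (sqrt (y j) / s j) * (x j - y j)))
    with (a j * s j ^ 2 * (hfun b c q1 q2 (y j / s j ^ 2)
          + wfun b c q1 q2 (sqrt (y j) / s j) / (2 * s j ^ 2) * (x j - y j)))
    by (field; lra).
  apply Rmult_le_compat_l; auto.
Qed.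

Section LossRow.
Variables (b1 c1 q11 q12 b2 c2 q21 q22 : R) (p : nat) (M : nat -> nat -> R).
Variables (sig1 : nat -> R) (sig2 : R).
Hypotheses (adm1 : admissible b1 c1 q11 q12) (adm2 : admissible b2 c2 q21 q22).
Hypotheses (hsig1 : forall j, (j < p)%nat -> 0 < sig1 j) (hsig2 : 0 < sig2).

(* The inner tangent bound is inserted into the outer one, which is legitimate
   because [h2] has a nonnegative slope [w2 / 2]. *)
Lemma loss_row_tangent (f g : nat -> nat -> R) i :
  (forall j, (j < p)%nat -> 0 <= M i j) -> 1 <= mi p M i ->
  (forall j, (j < p)%nat -> 0 <= f i j) -> (forall j, (j < p)%nat -> 0 <= g i j) ->
  mi p M i * h2 b2 c2 q21 q22 (/ (mi p M i * sig2 ^ 2) *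
    rsum p (fun j => M i j * sig1 j ^ 2 * h1 b1 c1 q11 q12 (f i j / sig1 j ^ 2)))
  <= mi p M i * h2 b2 c2 q21 q22 (/ (mi p M i * sig2 ^ 2) *
       rsum p (fun j => M i j * sig1 j ^ 2 * h1 b1 c1 q11 q12 (g i j / sig1 j ^ 2)))
     + / (4 * sig2 ^ 2) *
       (rsum p (fun j => Wmat b1 c1 q11 q12 b2 c2 q21 q22 p M sig1 sig2 g i j * f i j)
        - rsum p (fun j => Wmat b1 c1 q11 q12 b2 c2 q21 q22 p M sig1 sig2 g i j * g i j)).
Proof.
  intros hM hm hf hg; unfold Wmat, t_i, h1, h2, w1, w2.
  set (m := mi p M i) in *.
  set (A := fun x : nat -> nat -> R =>
         rsum p (fun j => M i j * sig1 j ^ 2 * hfun b1 c1 q11 q12 (x i j / sig1 j ^ 2))).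
  change (rsum p (fun j => M i j * sig1 j ^ 2 * hfun b1 c1 q11 q12 (f i j / sig1 j ^ 2)))
    with (A f).
  change (rsum p (fun j => M i j * sig1 j ^ 2 * hfun b1 c1 q11 q12 (g i j / sig1 j ^ 2)))
    with (A g).
  set (D := rsum p (fun j =>
              M i j * wfun b1 c1 q11 q12 (sqrt (g i j) / sig1 j) * (f i j - g i j))).
  assert (Hinner : A f <= A g + / 2 * D)
    by (apply rsum_hfun_tangent; auto).
  assert (HA : forall x, (forall j, (j < p)%nat -> 0 <= x i j) -> 0 <= A x / m).
  { intros x hx; apply Rdiv_le_0_compat; [| lra].
    apply rsum_nonneg; intros j hj; pose proof (hsig1 j hj).
    apply Rmult_le_pos; [apply Rmult_le_pos; [auto | nra] |].
    apply hfun_nonneg; auto; apply Rdiv_le_0_compat; [auto | apply pow_lt; auto]. }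
  pose proof (hfun_tangent_scaled b2 c2 q21 q22 adm2 sig2 (A f / m) (A g / m)
                hsig2 (HA f hf) (HA g hg)) as Houter.
  assert (hsig2sq : 0 < sig2 ^ 2) by (apply pow_lt; auto).
  assert (Eargs : forall x, / (m * sig2 ^ 2) * A x = A x / m / sig2 ^ 2)
    by (intros; field; lra).
  rewrite !Eargs; replace (/ m * A g) with (A g / m) by (unfold Rdiv; ring).
  set (omega := wfun b2 c2 q21 q22 (sqrt (A g / m) / sig2)) in *.
  assert (Hweights :
    rsum p (fun j => M i j * wfun b1 c1 q11 q12 (sqrt (g i j) / sig1 j) * omega * f i j)
    - rsum p (fun j => M i j * wfun b1 c1 q11 q12 (sqrt (g i j) / sig1 j) * omega * g i j)
    = omega * D).
  { rewrite <- rsum_minus; unfold D; rewrite <- rsum_scal_l.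
    apply rsum_ext; intros; ring. }
  assert (homega : 0 <= omega).
  { apply wfun_nonneg; auto; apply Rdiv_le_0_compat; [apply sqrt_pos | auto]. }
  assert (Hslope : omega / (2 * sig2 ^ 2) * (A f - A g) <= / (4 * sig2 ^ 2) * (omega * D)).
  { replace (/ (4 * sig2 ^ 2) * (omega * D)) with (omega / (2 * sig2 ^ 2) * (/ 2 * D))
      by (field; lra).
    apply Rmult_le_compat_l; [apply Rdiv_le_0_compat | ]; lra. }
  assert (Hscale : m * (omega / (2 * sig2 ^ 2) * (A f / m - A g / m))
                   = omega / (2 * sig2 ^ 2) * (A f - A g)) by (field; lra).
  rewrite Hweights; apply (Rmult_le_compat_l m) in Houter; [| lra].
  rewrite Rmult_plus_distr_l, Hscale in Houter; lra.
Qed.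

End LossRow.

Theorem lemma3
  (b1 c1 q11 q12 b2 c2 q21 q22 : R)
  (n p : nat) (M : nat -> nat -> R) (sig1 : nat -> R) (sig2 : R)
  (f g : nat -> nat -> R) :
  admissible b1 c1 q11 q12 ->
  admissible b2 c2 q21 q22 ->
  (forall i j, (i < n)%nat -> (j < p)%nat -> M i j = 0 \/ M i j = 1) ->
  (forall i, (i < n)%nat -> 1 <= mi p M i) ->
  (forall j, (j < p)%nat -> 0 < sig1 j) ->
  0 < sig2 ->
  (forall i j, (i < n)%nat -> (j < p)%nat -> 0 <= f i j) ->
  (forall i j, (i < n)%nat -> (j < p)%nat -> 0 <= g i j) ->
  rsum n (fun i => rsum p (fun j =>
     Wmat b1 c1 q11 q12 b2 c2 q21 q22 p M sig1 sig2 g i j * f i j))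
  <= rsum n (fun i => rsum p (fun j =>
     Wmat b1 c1 q11 q12 b2 c2 q21 q22 p M sig1 sig2 g i j * g i j)) ->
  Loss b1 c1 q11 q12 b2 c2 q21 q22 n p M sig1 sig2 f
  <= Loss b1 c1 q11 q12 b2 c2 q21 q22 n p M sig1 sig2 g.
Proof.
  intros adm1 adm2 HM Hm Hsig1 Hsig2 Hf Hg Hdescent.
  assert (HM0 : forall i j, (i < n)%nat -> (j < p)%nat -> 0 <= M i j)
    by (intros i j hi hj; destruct (HM i j hi hj) as [-> | ->]; lra).
  pose proof (fun i hi => loss_row_tangent b1 c1 q11 q12 b2 c2 q21 q22 p M sig1 sig2
    adm1 adm2 Hsig1 Hsig2 f g i (fun j => HM0 i j hi) (Hm i hi)
    (fun j => Hf i j hi) (fun j => Hg i j hi)) as Hrows.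
  apply rsum_le in Hrows; rewrite rsum_plus, rsum_scal_l, rsum_minus in Hrows.
  assert (Hsig2sq : 0 < sig2 ^ 2) by (apply pow_lt; auto).
  assert (Hdrop : / (4 * sig2 ^ 2) *
    (rsum n (fun i => rsum p (fun j =>
       Wmat b1 c1 q11 q12 b2 c2 q21 q22 p M sig1 sig2 g i j * f i j))
     - rsum n (fun i => rsum p (fun j =>
       Wmat b1 c1 q11 q12 b2 c2 q21 q22 p M sig1 sig2 g i j * g i j))) <= 0).
  { apply Rmult_le_0_l; [left; apply Rinv_0_lt_compat |]; lra. }
  assert (Hmtot : 0 <= mtot n p M).
  { apply rsum_nonneg; intros i hi; pose proof (Hm i hi); lra. }
  unfold Loss; apply Rmult_le_compat_l; [| lra].
  (* [mtot = 0] only for [n = 0], where the junk value [/ 0 = 0] still gives [0]. *)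
  unfold Rdiv; apply Rmult_le_pos; [lra |].
  destruct Hmtot as [Hpos | <-]; [left; apply Rinv_0_lt_compat; auto | rewrite Rinv_0; lra].
Qed.
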